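(* Let $n\ge2$, $k\in\{1,\dots,n\}$, $\epsilon=1/\sqrt{n(n-1)}$, and let the Pauli strings $W_1,\dots,W_n$ on $n-1$ qubits and coefficients $c_1,\dots,c_n$ be as in the context. Define $O_k=\sum_{j=1}^n c_jW_j$ and $\mathcal E_k=W_k$ (so $\mathcal E_k=Z_k$ for $k<n$ and $\mathcal E_n=\prod_{j=1}^{n-1}Z_j$). For $1\le m<n$ let $R_m=\exp(-i\theta_mG_m/2)$, where - for $1\le m<k$: $G_m=iW_{m+1}W_m$, and $\theta_m=\arctan(\sqrt m)$ if $m<k-1$, $\theta_{k-1}=\arctan\!\big(\sqrt{k-1}\,\epsilon/c_k\big)$; - for $k\le m<n$: $G_m=iW_mW_{m+1}$, and $\theta_m=\arctan(\sqrt{n-m})$ if $m>k$, $\theta_k=\arctan\!\Big(\frac{\sqrt{n-k}\,\epsilon}{\sqrt{(k-1)\epsilon^2+c_k^2}}\Big)$. Let $U=U_RU_L$ with $U_L=R_{k-1}R_{k-2}\cdots R_1$ and $U_R=R_kR_{k+1}\cdots R_{n-1}$ (empty products equal the identity). Then $UO_kU^\dagger=\mathcal E_k$.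
   Context: $X_j,Y_j,Z_j$ are Pauli operators on qubit $j$ of an $(n-1)$-qubit system; empty products of $Z$'s are the identity. For $k\ne n$: for $1\le j<k$, $W_j=Y_jZ_{j+1}\cdots Z_{k-1}Y_k$, $c_j=\epsilon$; $W_k=Z_k$, $c_k=\sqrt{(n-1)/n}$; for $k<j<n$, $W_j=X_kZ_{k+1}\cdots Z_{j-1}X_j$, $c_j=\epsilon$; and $W_n=X_kZ_{k+1}\cdots Z_{n-1}$, $c_n=\epsilon$. For $k=n$: for $1\le j<n$, $W_j=-Z_1Z_2\cdots Z_{j-1}X_j$, $c_j=\epsilon$; $W_n=\prod_{j=1}^{n-1}Z_j$, $c_n=\sqrt{(n-1)/n}$. *)

From HB Require Import structures.
From mathcomp Require Import all_boot all_order all_algebra.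
From mathcomp Require Import all_classical all_reals all_analysis.
From mathcomp Require Import complex.
Set Implicit Arguments. Unset Strict Implicit. Unset Printing Implicit Defensive.
Import Order.TTheory GRing.Theory Num.Theory numFieldNormedType.Exports.
Local Open Scope ring_scope.
Local Open Scope complex_scope.

Section Qubits.
Variable R : realType.
Local Notation C := R[i].

(* Hilbert space of q qubits: dimension 2^q, written (2^q).-1.+1 (= 2^q since
   2^q > 0) so that square matrices canonically form a ring. *)
Definition qdim (q : nat) : nat := ((2 ^ q)%N).-1.+1.
Lemma qdimE q : qdim q = (2 ^ q)%N.
Proof. by rewrite /qdim prednK // expn_gt0. Qed.

(* computational-basis bit l of the basis index x (qubit l+1) *)
Definition qbit (l x : nat) : bool := odd (x %/ 2 ^ l)%N.

(* single-qubit operator P : 'M_2 acting on qubit j (1-indexed) of q qubits *)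
Definition on_qubit (q j : nat) (P : 'M[C]_2) : 'M[C]_(qdim q) :=
  \matrix_(a, b)
    (if [forall l : 'I_q, (val l != j.-1) ==> (qbit l a == qbit l b)]
     then P (inord (qbit j.-1 a)) (inord (qbit j.-1 b)) else 0).

Definition pauliX : 'M[C]_2 := \matrix_(a, b) (if a == b then 0 else 1).
Definition pauliY : 'M[C]_2 :=
  \matrix_(a, b) (if a == b then 0 else if (val a == 0)%N then - 'i else 'i).
Definition pauliZ : 'M[C]_2 :=
  \matrix_(a, b) (if a == b then (if (val a == 0)%N then 1 else -1) else 0).

Definition Xq q j := on_qubit q j pauliX.
Definition Yq q j := on_qubit q j pauliY.
Definition Zq q j := on_qubit q j pauliZ.

Definition Zs q l r : 'M[C]_(qdim q) := \prod_(l <= i < r) Zq q i.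

Definition adj N (A : 'M[C]_N) : 'M[C]_N := (map_mx conjc A)^T.

Definition expm_partial N (A : 'M[C]_N.+1) (m : nat) : 'M[C]_N.+1 :=
  \sum_(k < m) ((k`!)%:R)^-1 *: A ^+ k.
Definition expm N (A : 'M[C]_N.+1) : 'M[C]_N.+1 :=
  \matrix_(a, b) ((limn (fun m => complex.Re (expm_partial A m a b)))
                    +i* (limn (fun m => complex.Im (expm_partial A m a b)))).

Section Construction.
Variables n k : nat.
Let q := n.-1.

Definition eps : R := (Num.sqrt (n%:R * (n%:R - 1)))^-1.

Definition W (j : nat) : 'M[C]_(qdim q) :=
  if k != n then
    if (j < k)%N then Yq q j * Zs q j.+1 k * Yq q k
    else if j == k then Zq q k
    else if (j < n)%N then Xq q k * Zs q k.+1 j * Xq q j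
    else Xq q k * Zs q k.+1 n
  else
    if (j < n)%N then - (Zs q 1 j * Xq q j)
    else Zs q 1 n.

Definition c (j : nat) : R :=
  if j == k then Num.sqrt ((n%:R - 1) / n%:R) else eps.

Definition O_k : 'M[C]_(qdim q) := \sum_(1 <= j < n.+1) (c j)%:C *: W j.
Definition E_k : 'M[C]_(qdim q) := W k.

Definition G (m : nat) : 'M[C]_(qdim q) :=
  if (m < k)%N then 'i *: (W m.+1 * W m) else 'i *: (W m * W m.+1).

Definition theta (m : nat) : R :=
  if (m < k)%N then
    (if (m < k.-1)%N then atan (Num.sqrt m%:R)
     else atan (Num.sqrt (k.-1)%:R * eps / c k))
  else
    (if (k < m)%N then atan (Num.sqrt (n - m)%:R)
     else atan (Num.sqrt (n - k)%:R * eps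
                / Num.sqrt ((k.-1)%:R * eps ^+ 2 + c k ^+ 2))).

Definition Rot (m : nat) : 'M[C]_(qdim q) :=
  expm ((- 'i * (theta m / 2)%:C) *: G m).

Definition U_L : 'M[C]_(qdim q) := \prod_(i < k.-1) Rot (k.-1 - i).
Definition U_R : 'M[C]_(qdim q) := \prod_(k <= m < n) Rot m.
Definition U : 'M[C]_(qdim q) := U_R * U_L.

End Construction.
End Qubits.

(* The strings W_1, ..., W_n are Hermitian involutions that pairwise anticommute, as can be
   read off their binary symplectic representation X^x Z^z.  For such a family, K = W_a W_b
   squares to -1, so exp(t K / 2) = cos(t/2) + sin(t/2) K, and conjugation by it rotates the
   coefficient pair (v_a, v_b) of sum_j v_j W_j by the angle t and fixes the other coefficients.
   Each R_m = exp(theta_m W_a W_b / 2) is such a Givens rotation, with the angle that zeroes one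
   coefficient: U_L sweeps the weight of c_1, ..., c_(k-1) into the k-th coefficient, U_R then
   sweeps c_n, ..., c_(k+1) into it, and since sum_j c_j^2 = 1 what remains is W_k. *)

From HB Require Import structures.
From mathcomp Require Import all_boot all_order all_algebra.
From mathcomp Require Import all_classical all_reals all_analysis.
From mathcomp Require Import complex.
From mathcomp Require Import zify ring lra.
Set Implicit Arguments. Unset Strict Implicit. Unset Printing Implicit Defensive.
Import Order.TTheory GRing.Theory Num.Theory numFieldNormedType.Exports.
Local Open Scope ring_scope.
Local Open Scope complex_scope.

Ltac nat_cases := rewrite ?eqn_leq; repeat (match goal with
 | |- context [(?a <= ?b)%N] => let h := fresh "h" in case: (boolP (a <= b)%N) => h
 end; try (exfalso; lia)); try done.

Lemma qbit0 x : qbit 0 x = odd x.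
Proof. by rewrite /qbit expn0 divn1. Qed.

Lemma qbitS l x : qbit l.+1 x = qbit l x./2.
Proof. by rewrite /qbit expnS divnMA -divn2 -divnMA mulnC divnMA. Qed.

Lemma eq_from_qbits p x y : (x < 2 ^ p)%N -> (y < 2 ^ p)%N ->
  (forall l, (l < p)%N -> qbit l x = qbit l y) -> x = y.
Proof.
elim: p x y => [|p IH] x y; first by rewrite expn0 !ltnS !leqn0 => /eqP -> /eqP ->.
rewrite expnSr => x_lt y_lt eq_xy.
have eq_odd : odd x = odd y by rewrite -!qbit0; apply: eq_xy.
have eq_half : x./2 = y./2.
  apply: IH; rewrite -?divn2 ?ltn_divLR // => l lp.
  by rewrite !divn2 -!qbitS; apply: eq_xy.
by rewrite -(odd_double_half x) -(odd_double_half y) eq_odd eq_half.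
Qed.

Section PauliStrings.
Variables (R : realType) (q : nat).
Local Notation C := R[i].
Local Notation M := 'M[C]_(qdim q).

Definition bitstring := {ffun 'I_q -> bool}.
Definition bits (x : nat) : bitstring := [ffun l : 'I_q => qbit l x].

Lemma bits_inj : injective (fun a : 'I_(qdim q) => bits a).
Proof.
move=> a b /ffunP eq_ab; apply/val_inj/(@eq_from_qbits q); rewrite -?qdimE ?ltn_ord //.
by move=> l lq; have := eq_ab (Ordinal lq); rewrite !ffunE.
Qed.

Lemma sum_bits (V : nmodType) (G : 'I_(qdim q) -> V) (F : bitstring -> V) :
  G =1 F \o bits -> \sum_a G a = \sum_t F t.
Proof.
move=> eq_GF; under eq_bigr do rewrite eq_GF.
have : bijective (fun a : 'I_(qdim q) => bits a).
  apply: inj_card_bij; first exact: bits_inj.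
  by rewrite card_ffun card_bool !card_ord qdimE.
case=> g bitsK gK; rewrite (reindex (fun a : 'I_(qdim q) => bits a)) //.
by exists g => t _; [apply: bitsK | apply: gK].
Qed.

Definition bvxor (s t : bitstring) : bitstring := [ffun l => s l (+) t l].
Definition bvdot (s t : bitstring) : bool := \big[addb/false]_(l < q) (s l && t l).
Definition bv0 : bitstring := [ffun => false].

Lemma bvxorA : associative bvxor.
Proof. by move=> s t u; apply/ffunP => l; rewrite !ffunE addbA. Qed.
Lemma bvxorC : commutative bvxor.
Proof. by move=> s t; apply/ffunP => l; rewrite !ffunE addbC. Qed.
Lemma bvxorK t : cancel (bvxor^~ t) (bvxor^~ t).
Proof. by move=> s; apply/ffunP => l; rewrite !ffunE addbK. Qed.
Lemma bvxor0 t : bvxor t bv0 = t.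
Proof. by apply/ffunP => l; rewrite !ffunE addbF. Qed.
Lemma bvxorxx t : bvxor t t = bv0.
Proof. by apply/ffunP => l; rewrite !ffunE addbb. Qed.

Lemma bvdotDl s1 s2 t : bvdot (bvxor s1 s2) t = bvdot s1 t (+) bvdot s2 t.
Proof.
rewrite /bvdot -big_split /=; apply: eq_bigr => l _.
by rewrite ffunE; case: (t l); rewrite ?andbT ?andbF.
Qed.
Lemma bvdotDr s t1 t2 : bvdot s (bvxor t1 t2) = bvdot s t1 (+) bvdot s t2.
Proof.
rewrite /bvdot -big_split /=; apply: eq_bigr => l _.
by rewrite ffunE; case: (s l).
Qed.
Lemma bvdot0l t : bvdot bv0 t = false.
Proof. by rewrite /bvdot big1 // => l _; rewrite ffunE. Qed.
Lemma bvdot0r s : bvdot s bv0 = false.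
Proof. by rewrite /bvdot big1 // => l _; rewrite ffunE andbF. Qed.

(* Qubits are numbered from 1, as in [on_qubit]: bit [l] of a string is qubit [l.+1]. *)
Definition bvset (P : nat -> bool) : bitstring := [ffun l : 'I_q => P l.+1].

Lemma bvset_xor P Q : bvxor (bvset P) (bvset Q) = bvset (fun i => P i (+) Q i).
Proof. by apply/ffunP => l; rewrite !ffunE. Qed.
Lemma eq_bvset P Q : (forall i, (0 < i <= q)%N -> P i = Q i) -> bvset P = bvset Q.
Proof. by move=> eqPQ; apply/ffunP => l; rewrite !ffunE eqPQ //= ltn_ord. Qed.
Lemma bvset0 : bvset (fun=> false) = bv0.
Proof. by apply/ffunP => l; rewrite !ffunE. Qed.

(* The Pauli string X^x Z^z: Z^z multiplies |b> by (-1)^(z.b), then X^x flips the bits in x. *)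
Definition pauli (x z : bitstring) : M :=
  \matrix_(a, b) (if bits a == bvxor (bits b) x then (-1) ^+ bvdot z (bits b) else 0).

Lemma pauli_mul x1 z1 x2 z2 :
  pauli x1 z1 * pauli x2 z2 = (-1) ^+ bvdot z1 x2 *: pauli (bvxor x1 x2) (bvxor z1 z2).
Proof.
apply/matrixP => a b; rewrite -mulmxE !mxE.
rewrite (@sum_bits _ _ (fun t => (if bits a == bvxor t x1 then (-1) ^+ bvdot z1 t else 0) *
   (if t == bvxor (bits b) x2 then (-1) ^+ bvdot z2 (bits b) else 0))); last first.
  by move=> c; rewrite /= !mxE.
rewrite (bigD1 (bvxor (bits b) x2)) //= big1 ?addr0 => [|t /negbTE ->]; last by rewrite mulr0.
rewrite eqxx -bvxorA (bvxorC x2 x1); case: eqP => _; last by rewrite mul0r mulr0.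
by rewrite bvdotDr bvdotDl !signr_addb; ring.
Qed.

Lemma pauli_comm x1 z1 x2 z2 :
  pauli x1 z1 * pauli x2 z2 =
  (-1) ^+ (bvdot z1 x2 (+) bvdot z2 x1) *: (pauli x2 z2 * pauli x1 z1).
Proof.
rewrite !pauli_mul scalerA -signr_addb addbK [bvxor x2 _]bvxorC.
by rewrite [bvxor z2 _]bvxorC.
Qed.

Lemma pauli_adj x z : adj (pauli x z) = (-1) ^+ bvdot z x *: pauli x z.
Proof.
apply/matrixP => a b; rewrite !mxE.
have -> : (bits b == bvxor (bits a) x) = (bits a == bvxor (bits b) x).
  by apply/eqP/eqP => ->; rewrite bvxorK.
case: eqP => [->|_]; last by rewrite conjc0 mulr0.
by rewrite rmorph_sign bvdotDr signr_addb mulrC.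
Qed.

Lemma pauli0 : pauli bv0 bv0 = 1.
Proof.
apply/matrixP => a b; rewrite !mxE bvxor0 bvdot0l expr0.
by case: (eqVneq a b) => [->|/negbTE neq_ab]; rewrite ?eqxx // (inj_eq bits_inj) neq_ab.
Qed.

Section OneQubit.
Variable j : nat.
Hypothesis j_range : (0 < j <= q)%N.

Let J_lt : (j.-1 < q)%N.
Proof. by case/andP: j_range => j_gt0 j_le; rewrite prednK. Qed.
Let J : 'I_q := Ordinal J_lt.

Lemma bvset1 : bvset (fun i => i == j) = [ffun l => l == J].
Proof.
apply/ffunP => l; rewrite !ffunE -(inj_eq val_inj) /=.
by case/andP: j_range => j_gt0 _; apply/eqP/eqP; lia.
Qed.

Lemma bvdot_bvset1r P : bvdot (bvset P) (bvset (fun i => i == j)) = P j.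
Proof.
rewrite bvset1 /bvdot (bigD1 J) //= big1 => [|l /negbTE neq_lJ]; last first.
  by rewrite !ffunE neq_lJ andbF.
by rewrite !ffunE eqxx andbT addbF /= prednK //; case/andP: j_range.
Qed.

Lemma bvdot_bvset1l t : bvdot [ffun l => l == J] t = t J.
Proof.
rewrite /bvdot (bigD1 J) //= big1 => [|l /negbTE neq_lJ]; last by rewrite ffunE neq_lJ.
by rewrite ffunE eqxx addbF.
Qed.

Lemma eq_bvxor1 (s t : bitstring) : (s == bvxor t [ffun l => l == J]) =
  [forall l, (l != J) ==> (s l == t l)] && (s J == ~~ t J).
Proof.
apply/eqP/andP => [-> | [/forallP eq_st /eqP eq_J]].
  split; last by rewrite !ffunE eqxx addbT.
  by apply/forallP => l; apply/implyP => /negbTE neq_lJ; rewrite !ffunE neq_lJ addbF.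
apply/ffunP => l; rewrite !ffunE; case: (eqVneq l J) => [->|neq_lJ]; first by rewrite addbT.
by rewrite addbF; apply/eqP; exact: (implyP (eq_st l) neq_lJ).
Qed.

Lemma eq_bv1 (s t : bitstring) : (s == t) = [forall l, (l != J) ==> (s l == t l)] && (s J == t J).
Proof.
apply/eqP/andP => [-> | [/forallP eq_st /eqP eq_J]].
  by split => //; apply/forallP => l; apply/implyP.
apply/ffunP => l; case: (eqVneq l J) => [->|neq_lJ] //.
by apply/eqP; exact: (implyP (eq_st l) neq_lJ).
Qed.

Lemma on_qubitE (P : 'M[C]_2) a b : on_qubit q j P a b =
  if [forall l, (l != J) ==> (bits a l == bits b l)]
  then P (inord (bits a J)) (inord (bits b J)) else 0.
Proof.
rewrite mxE !ffunE; congr (if _ then _ else _).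
by apply: eq_forallb => l; rewrite !ffunE.
Qed.

Let inord_bool_eq (x y : bool) : ((inord x : 'I_2) == inord y) = (x == y).
Proof. by case: x; case: y; rewrite ?eqxx // -(inj_eq val_inj) /= !inordK. Qed.
Let inord_bool_eq0 (x : bool) : (val (inord x : 'I_2) == 0)%N = ~~ x.
Proof. by case: x; rewrite -[val _]/(nat_of_ord _) inordK. Qed.

Lemma Xq_pauli : Xq R q j = pauli (bvset (fun i => i == j)) bv0.
Proof.
apply/matrixP => a b; rewrite on_qubitE !mxE bvset1 eq_bvxor1 bvdot0l expr0.
case: [forall l, _] => //=; rewrite inord_bool_eq.
by case: (bits a J); case: (bits b J).
Qed.

Lemma Zq_pauli : Zq R q j = pauli bv0 (bvset (fun i => i == j)).
Proof.
apply/matrixP => a b; rewrite on_qubitE !mxE bvset1 bvxor0 eq_bv1 bvdot_bvset1l.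
case: [forall l, _] => //=; rewrite inord_bool_eq inord_bool_eq0.
by case: (bits a J); case: (bits b J).
Qed.

Lemma Yq_pauli :
  Yq R q j = 'i *: pauli (bvset (fun i => i == j)) (bvset (fun i => i == j)).
Proof.
apply/matrixP => a b; rewrite on_qubitE !mxE bvset1 eq_bvxor1 bvdot_bvset1l.
case: [forall l, _] => /=; last by rewrite mulr0.
rewrite inord_bool_eq inord_bool_eq0.
by case: (bits a J); case: (bits b J); rewrite /= ?mulr0 ?mulr1 ?mulrN1.
Qed.

End OneQubit.

Lemma Zs_pauli l r : (0 < l)%N -> (r <= q.+1)%N ->
  Zs R q l r = pauli bv0 (bvset (fun i => l <= i < r)%N).
Proof.
move=> l_gt0; elim: r => [|r IH] r_le.
  by rewrite /Zs big_geq // -pauli0 -bvset0; congr pauli; apply: eq_bvset => i _; nat_cases.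
case: (leqP l r) => [l_le_r|r_lt_l].
  rewrite /Zs big_nat_recr //= -/(Zs R q l r) IH 1?ltnW // Zq_pauli; last by lia.
  rewrite pauli_mul bvdot0r expr0 scale1r bvxor0 bvset_xor; congr pauli.
  by apply: eq_bvset => i _; nat_cases.
by rewrite /Zs big_geq // -pauli0 -bvset0; congr pauli; apply: eq_bvset => i _; nat_cases.
Qed.

End PauliStrings.

Section Adjoint.
Variables (R : realType) (N : nat).
Local Notation M := 'M[R[i]]_N.+1.

Lemma adjD (A B : M) : adj (A + B) = adj A + adj B.
Proof. by apply/matrixP => a b; rewrite !mxE rmorphD. Qed.
Lemma adjZ s (A : M) : adj (s *: A) = conjc s *: adj A.
Proof. by apply/matrixP => a b; rewrite !mxE rmorphM. Qed.
Lemma adjM (A B : M) : adj (A * B) = adj B * adj A.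
Proof. by rewrite /adj -!mulmxE map_mxM trmx_mul. Qed.
Lemma adj1 : adj (1 : M) = 1.
Proof. by apply/matrixP => a b; rewrite !mxE eq_sym; case: eqP; rewrite ?conjc0 ?conjc1. Qed.

Definition conjm (X Y : M) : M := X * Y * adj X.

Lemma conjm1 Y : conjm 1 Y = Y.
Proof. by rewrite /conjm adj1 mul1r mulr1. Qed.
Lemma conjmM X Y Z : conjm (X * Y) Z = conjm X (conjm Y Z).
Proof. by rewrite /conjm adjM !mulrA. Qed.

End Adjoint.

Section PauliW.
Variables (R : realType) (n k : nat).
Hypothesis n_ge2 : (2 <= n)%N.
Hypothesis k_range : (0 < k <= n)%N.
Local Notation q := n.-1.
Local Notation pauli := (pauli R).
Local Notation bvset := (bvset q).

Definition W_x j i : bool :=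
  if k != n then
    (if (j < k)%N then (i == j) (+) (i == k) else if j == k then false
     else if (j < n)%N then (i == k) (+) (i == j) else (i == k))
  else (if (j < n)%N then i == j else false).
Definition W_z j i : bool :=
  if k != n then
    (if (j < k)%N then (j <= i <= k)%N else if j == k then i == k
     else if (j < n)%N then (k < i < j)%N else (k < i < n)%N)
  else (0 < i < j)%N.
Definition W_sign j : R[i] :=
  if k != n then (if (j < k)%N then -1 else 1) else (if (j < n)%N then -1 else 1).

Lemma W_pauli j : (0 < j <= n)%N ->
  W R n k j = W_sign j *: pauli (bvset (W_x j)) (bvset (W_z j)).
Proof.
case/andP=> j_gt0 j_le_n; rewrite /W /W_sign /W_x /W_z.
case: (eqVneq k n) => [k_eq_n|k_neq_n] /=.
  case: (ltnP j n) => [j_lt_n|j_ge_n].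
    rewrite Xq_pauli ?Zs_pauli; try lia.
    rewrite -bvset0 pauli_mul bvdot_bvset1r; last by lia.
    rewrite (_ : (0 < j < j)%N = false) ?expr0 ?scale1r ?scaleN1r ?bvset_xor; last by lia.
    by congr (- pauli _ _); apply: eq_bvset => i _; nat_cases.
  rewrite Zs_pauli //; last by lia.
  by rewrite -bvset0 scale1r; congr pauli; apply: eq_bvset => i _; nat_cases.
case: (ltngtP j k) => [j_lt_k|k_lt_j|j_eq_k].
- rewrite (Yq_pauli R (j:=j)) ?(Yq_pauli R (j:=k)) ?Zs_pauli; try lia.
  rewrite -scalerAl pauli_mul bvdot0r expr0 scale1r bvxor0 -scalerAl -scalerAr pauli_mul.
  rewrite !bvset_xor bvdot_bvset1r; last by lia.
  rewrite (_ : (k == j) (+) (j < k < k)%N = false) ?expr0 ?scale1r ?scalerA ?mulr1;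
    last by nat_cases.
  by rewrite -expr2 sqr_i; congr (_ *: pauli _ _); apply: eq_bvset => i _; nat_cases.
- case: (ltnP j n) => [j_lt_n|j_ge_n].
    rewrite (Xq_pauli R (j:=j)) ?(Xq_pauli R (j:=k)) ?Zs_pauli; try lia.
    rewrite pauli_mul bvdot0l expr0 scale1r bvxor0 [bvxor (bv0 _) _]bvxorC bvxor0.
    rewrite pauli_mul bvdot_bvset1r ?ltnn ?andbF ?expr0 ?scale1r ?bvxor0 ?bvset_xor; last by lia.
    by congr pauli; apply: eq_bvset => i _; nat_cases.
  rewrite (Xq_pauli R (j:=k)) ?Zs_pauli; try lia.
  rewrite pauli_mul bvdot0l expr0 !scale1r [bvxor (bv0 _) _]bvxorC bvxor0 bvxor0.
  by congr pauli; apply: eq_bvset => i _; nat_cases.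
- by rewrite Zq_pauli -?bvset0 ?scale1r //; lia.
Qed.

Definition W_dot i j := bvdot (bvset (W_z i)) (bvset (W_x j)).

Lemma W_dotE i j : (0 < j <= n)%N -> W_dot i j =
  if k != n then
    (if (j < k)%N then W_z i j (+) W_z i k else if j == k then false
     else if (j < n)%N then W_z i k (+) W_z i j else W_z i k)
  else (if (j < n)%N then W_z i j else false).
Proof.
case/andP=> j_gt0 j_le_n; rewrite /W_dot /W_x.
case: (eqVneq k n) => [k_eq_n|k_neq_n] /=.
  case: (ltnP j n) => j_lt_n; first by rewrite bvdot_bvset1r //; lia.
  by rewrite bvset0 bvdot0r.
have bvdot2 a b : (0 < a <= q)%N -> (0 < b <= q)%N ->
    bvdot (bvset (W_z i)) (bvset (fun l => (l == a) (+) (l == b))) = W_z i a (+) W_z i b.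
  by move=> a_range b_range; rewrite -bvset_xor bvdotDr !bvdot_bvset1r.
case: (ltngtP j k) => j_k.
- by rewrite bvdot2 //; lia.
- case: (ltnP j n) => j_n; first by rewrite bvdot2 //; lia.
  by rewrite bvdot_bvset1r //; lia.
- by rewrite bvset0 bvdot0r.
Qed.

Lemma W_dot_diag j : (0 < j <= n)%N -> W_dot j j = false.
Proof. by move=> j_range; rewrite W_dotE // /W_z; case/andP: j_range => *; nat_cases. Qed.

Lemma W_dot_anti i j : (0 < i <= n)%N -> (0 < j <= n)%N -> i != j ->
  W_dot i j (+) W_dot j i = true.
Proof.
move=> /andP[i_gt0 i_le] /andP[j_gt0 j_le]; rewrite !W_dotE ?i_gt0 ?j_gt0 // /W_z.
rewrite eqn_leq; nat_cases.
Qed.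

Lemma W_sign_sqr j : W_sign j * W_sign j = 1.
Proof. by rewrite /W_sign; case: ifP; case: ifP; rewrite ?mulrNN mulr1. Qed.
Lemma W_sign_conj j : conjc (W_sign j) = W_sign j.
Proof. by rewrite /W_sign; case: ifP; case: ifP; rewrite ?rmorphN rmorph1. Qed.

Lemma W_sqr j : (0 < j <= n)%N -> W R n k j * W R n k j = 1.
Proof.
move=> j_range; rewrite W_pauli // -scalerAl -scalerAr pauli_mul !scalerA.
by rewrite -/(W_dot j j) W_dot_diag // !bvxorxx pauli0 expr0 mulr1 W_sign_sqr scale1r.
Qed.

Lemma W_adj j : (0 < j <= n)%N -> adj (W R n k j) = W R n k j.
Proof.
move=> j_range; rewrite W_pauli // adjZ pauli_adj -/(W_dot j j) W_dot_diag //.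
by rewrite expr0 scale1r W_sign_conj.
Qed.

Lemma W_anticomm i j : (0 < i <= n)%N -> (0 < j <= n)%N -> i != j ->
  W R n k i * W R n k j = - (W R n k j * W R n k i).
Proof.
move=> i_range j_range neq_ij; rewrite !W_pauli // -!scalerAl -!scalerAr !scalerA.
rewrite pauli_comm -/(W_dot i j) -/(W_dot j i) W_dot_anti // expr1 scaleN1r.
by rewrite mulrC scalerN.
Qed.

End PauliW.

Section Rotation.
Local Open Scope classical_set_scope.
Variables (R : realType) (N : nat).
Local Notation C := R[i].
Local Notation M := 'M[C]_N.+1.
Variable K : M.
Hypothesis K_sqr : K * K = -1.

Definition rotor (t : R) : M := (cos t)%:C *: 1 + (sin t)%:C *: K.

Lemma rotorD s t : rotor s * rotor t = rotor (s + t).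
Proof.
rewrite /rotor mulrDl !mulrDr -!scalerAl -!scalerAr !mul1r mulr1 K_sqr !scalerA.
by apply/matrixP => a b; rewrite !mxE cosD sinD !(rmorphB, rmorphD, rmorphM); ring.
Qed.

Lemma rotor0 : rotor 0 = 1.
Proof. by rewrite /rotor cos0 sin0 scale0r addr0 scale1r. Qed.

Lemma rotor_anticomm (D : M) t : K * D = - (D * K) -> rotor t * D = D * rotor (- t).
Proof.
move=> KD; rewrite /rotor cosN sinN mulrDl mulrDr -!scalerAl -!scalerAr mul1r mulr1.
by rewrite KD rmorphN scaleNr scalerN.
Qed.

Lemma rotor_comm (D : M) t : K * D = D * K -> rotor t * D = D * rotor t.
Proof. by move=> KD; rewrite /rotor mulrDl mulrDr -!scalerAl -!scalerAr mul1r mulr1 KD. Qed.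

Section Conjugation.
Hypothesis K_skew : adj K = - K.

Lemma adj_rotor t : adj (rotor t) = rotor (- t).
Proof. by rewrite /rotor adjD !adjZ adj1 K_skew !conjc_real cosN sinN rmorphN scalerN scaleNr. Qed.

Lemma conjm_rotor_comm (D : M) t : K * D = D * K -> conjm (rotor t) D = D.
Proof.
by move=> KD; rewrite /conjm adj_rotor (rotor_comm t KD) -mulrA rotorD addrN rotor0 mulr1.
Qed.

Lemma conjm_rotor_anticomm (D : M) t :
  K * D = - (D * K) -> conjm (rotor t) D = D * rotor (- (t + t)).
Proof.
by move=> KD; rewrite /conjm adj_rotor (rotor_anticomm t KD) -mulrA rotorD opprD.
Qed.

End Conjugation.

Lemma exprK m : K ^+ m = (-1) ^+ m./2 *: (if odd m then K else 1).
Proof.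
elim: m => [|m IH]; first by rewrite expr0 scale1r.
rewrite exprSr IH -uphalfE uphalf_half; case: (boolP (odd m)) => odd_m /=.
  by rewrite odd_m -scalerAl K_sqr add1n exprS mulN1r scaleNr scalerN.
by rewrite (negbTE odd_m) -scalerAl mul1r add0n.
Qed.

Lemma expm_partial_rotor t m : expm_partial (t%:C *: K) m =
  (\sum_(i < m) cos_coeff t i)%:C *: 1 + (\sum_(i < m) sin_coeff t i)%:C *: K.
Proof.
have half_pred i : odd i -> i.-1./2 = i./2.
  move=> odd_i; have : (i %% 2 = 1)%N by rewrite modn2 odd_i.
  by rewrite -!divn2; lia.
elim: m => [|m IH]; first by rewrite /expm_partial !big_ord0 rmorph0 !scale0r addr0.
rewrite /expm_partial big_ord_recr /= -/(expm_partial _ m) IH !big_ord_recr /=.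
rewrite !rmorphD !scalerDl addrACA; congr (_ + _).
rewrite exprZn exprK /cos_coeff /sin_coeff /=; case: (boolP (odd m)) => odd_m /=.
  rewrite half_pred // !mul0r rmorph0 scale0r add0r !scalerA; congr (_ *: _).
  by rewrite !rmorphM fmorphV !rmorphXn !rmorph_nat ?rmorphN ?rmorph1; ring.
rewrite !mul0r rmorph0 scale0r addr0 !scalerA; congr (_ *: _).
by rewrite !rmorphM fmorphV !rmorphXn !rmorph_nat ?rmorphN ?rmorph1; ring.
Qed.

Lemma expm_rotor t : expm (t%:C *: K) = rotor t.
Proof.
have lim_ReIm (f g : nat -> R) l : f =1 g -> g @ \oo --> l -> lim (f @ \oo) = l.
  by move=> /funext ->; apply: cvg_lim.
have cvg_cos : series (cos_coeff t) @ \oo --> cos t.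
  by rewrite cos.unlock; exact: is_cvg_series_cos_coeff.
have cvg_sin : series (sin_coeff t) @ \oo --> sin t.
  by rewrite sin.unlock; exact: is_cvg_series_sin_coeff.
have scaleC_Re (x : R) (w : C) : complex.Re (x%:C * w) = x * complex.Re w.
  by case: w => wr wi /=; rewrite mul0r subr0.
have scaleC_Im (x : R) (w : C) : complex.Im (x%:C * w) = x * complex.Im w.
  by case: w => wr wi /=; rewrite mul0r addr0.
apply/matrixP => a b; rewrite /expm /rotor !mxE.
apply/eqP; rewrite eq_complex; apply/andP; split; apply/eqP.
all: rewrite /= ?raddfD /= ?scaleC_Re ?scaleC_Im.
- apply: (lim_ReIm _ (fun m => series (cos_coeff t) m * complex.Re (a == b)%:R +
                               series (sin_coeff t) m * complex.Re (K a b))).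
    by move=> m; rewrite expm_partial_rotor !mxE raddfD /= !scaleC_Re /series /= !big_mkord.
  by apply: cvgD; apply: cvgMr_tmp; [exact: cvg_cos | exact: cvg_sin].
- apply: (lim_ReIm _ (fun m => series (cos_coeff t) m * complex.Im (a == b)%:R +
                               series (sin_coeff t) m * complex.Im (K a b))).
    by move=> m; rewrite expm_partial_rotor !mxE raddfD /= !scaleC_Im /series /= !big_mkord.
  by apply: cvgD; apply: cvgMr_tmp; [exact: cvg_cos | exact: cvg_sin].
Qed.

End Rotation.

Section GivensAngles.
Variable R : realType.

Lemma sin_atan_mul (x : R) : sin (atan x) = x * cos (atan x).
Proof.
have cos_neq0 : cos (atan x) != 0.
  by rewrite cos_atan invr_eq0 sqrtr_eq0 -ltNge ltr_pwDl // sqr_ge0.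
by rewrite -{2}(atanK x) /tan divfK.
Qed.

Lemma rot_atan_zero (p y : R) : 0 < p ->
  cos (atan (y / p)) * y - sin (atan (y / p)) * p = 0.
Proof. by move=> p_gt0; rewrite sin_atan_mul; field; exact: lt0r_neq0. Qed.

Lemma rot_atan_norm (p y w : R) : 0 < p -> 0 <= w -> w ^+ 2 = p ^+ 2 + y ^+ 2 ->
  cos (atan (y / p)) * p + sin (atan (y / p)) * y = w.
Proof.
move=> p_gt0 w_ge0 w_sqr; rewrite sin_atan_mul cos_atan.
set r := Num.sqrt _.
have r_gt0 : 0 < r by rewrite sqrtr_gt0 ltr_pwDl // sqr_ge0.
have r_sqr : r ^+ 2 = 1 + (y / p) ^+ 2 by rewrite sqr_sqrtr // addr_ge0 // sqr_ge0.
have -> : w = r * p.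
  apply: (@pexpIrn _ 2) => //; rewrite ?nnegrE ?mulr_ge0 ?(ltW r_gt0) ?(ltW p_gt0) //.
  by rewrite w_sqr exprMn r_sqr; field; exact: lt0r_neq0.
have -> : r * p = r ^+ 2 * p / r by field; exact: lt0r_neq0.
by rewrite r_sqr; field; rewrite !lt0r_neq0.
Qed.

End GivensAngles.

Section SumsOfSquares.
Variable R : realType.

Definition sqsum (v : nat -> R) (a b : nat) : R := \sum_(a <= i < b) v i ^+ 2.

Lemma sqsum_ge0 v a b : 0 <= sqsum v a b.
Proof. by apply: sumr_ge0 => i _; exact: sqr_ge0. Qed.

Lemma sqsum_recl v a b : (a < b)%N -> sqsum v a b = v a ^+ 2 + sqsum v a.+1 b.
Proof. exact: big_ltn. Qed.

Lemma sqsum_recr v a b : (a <= b)%N -> sqsum v a b.+1 = sqsum v a b + v b ^+ 2.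
Proof. exact: big_nat_recr. Qed.

Lemma sqsum_const v a b x : (forall i, (a <= i < b)%N -> v i = x) ->
  sqsum v a b = (b - a)%:R * x ^+ 2.
Proof.
move=> v_const; rewrite /sqsum (eq_big_nat _ _ (F2 := fun=> x ^+ 2)).
  by rewrite sumr_const_nat mulr_natl.
by move=> i /v_const ->.
Qed.

Lemma sqsum_cat v a m b : (a <= m <= b)%N -> sqsum v a b = sqsum v a m + sqsum v m b.
Proof. by case/andP=> a_le_m m_le_b; exact: big_cat_nat. Qed.

Lemma eq_sqsum (v w : nat -> R) a b :
  (forall i, (a <= i < b)%N -> v i = w i) -> sqsum v a b = sqsum w a b.
Proof. by move=> eq_vw; apply: eq_big_nat => i /eq_vw ->. Qed.

Lemma sqrt_sqsum1 v a : 0 <= v a -> Num.sqrt (sqsum v a a.+1) = v a.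
Proof. by move=> va_ge0; rewrite /sqsum big_nat1 sqrtr_sqr ger0_norm. Qed.

End SumsOfSquares.

Lemma bigD2_seq (I : eqType) (V : nmodType) (F : I -> V) r a b :
  uniq r -> a \in r -> b \in r -> a != b ->
  \sum_(i <- r) F i = F a + (F b + \sum_(i <- r | (i != a) && (i != b)) F i).
Proof.
move=> r_uniq a_r b_r neq_ab; rewrite (bigD1_seq a) //; congr (_ + _).
rewrite -big_filter (bigD1_seq b) ?filter_uniq ?mem_filter 1?eq_sym ?neq_ab ?b_r //.
by rewrite big_filter_cond.
Qed.

Section AnticommutingFamily.
Variables (R : realType) (N n : nat).
Local Notation C := R[i].
Local Notation M := 'M[C]_N.+1.
Variable Wf : nat -> M.
Hypothesis Wf_sqr : forall j, (0 < j <= n)%N -> Wf j * Wf j = 1.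
Hypothesis Wf_adj : forall j, (0 < j <= n)%N -> adj (Wf j) = Wf j.
Hypothesis Wf_anticomm : forall i j, (0 < i <= n)%N -> (0 < j <= n)%N -> i != j ->
  Wf i * Wf j = - (Wf j * Wf i).

Definition lincomb (v : nat -> R) : M := \sum_(1 <= j < n.+1) (v j)%:C *: Wf j.

Lemma eq_lincomb v w : (forall j, (0 < j <= n)%N -> v j = w j) -> lincomb v = lincomb w.
Proof. by move=> eq_vw; apply: eq_big_nat => j /andP[j_gt0 j_le]; rewrite eq_vw // j_gt0 -ltnS. Qed.

Lemma lincomb_delta j : (0 < j <= n)%N -> lincomb (fun i => (i == j)%:R) = Wf j.
Proof.
move=> j_range; rewrite /lincomb (bigD1_seq j) ?mem_index_iota ?ltnS ?iota_uniq //=.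
rewrite eqxx scale1r big1 ?addr0 // => i /negbTE ->.
by rewrite scale0r.
Qed.

Lemma conjm_lincomb X v :
  conjm X (lincomb v) = \sum_(1 <= j < n.+1) (v j)%:C *: conjm X (Wf j).
Proof.
rewrite /conjm /lincomb big_distrr big_distrl /=.
by apply: eq_bigr => j _; rewrite -scalerAr -scalerAl.
Qed.

Section Givens.
Variables a b : nat.
Hypotheses (a_range : (0 < a <= n)%N) (b_range : (0 < b <= n)%N) (neq_ab : a != b).
Local Notation K := (Wf a * Wf b).

Lemma Wf_mul_sqr : K * K = -1.
Proof.
rewrite mulrA -(mulrA _ _ (Wf a)) Wf_anticomm 1?eq_sym //.
by rewrite mulrN mulNr mulrA Wf_sqr // mul1r Wf_sqr.
Qed.

Lemma Wf_mul_skew : adj K = - K.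
Proof. by rewrite adjM !Wf_adj // Wf_anticomm 1?eq_sym // opprK. Qed.

Definition givens (t : R) : M := rotor K (t / 2).

Let rotor_double t : rotor K (- (t / 2 + t / 2)) = rotor K (- t).
Proof. by rewrite -splitr. Qed.

Lemma conjm_givens_l t : conjm (givens t) (Wf a) = (cos t)%:C *: Wf a - (sin t)%:C *: Wf b.
Proof.
rewrite (conjm_rotor_anticomm Wf_mul_sqr Wf_mul_skew) ?rotor_double; last first.
  by rewrite -mulrA Wf_anticomm 1?eq_sym // mulrN.
by rewrite /rotor cosN sinN rmorphN mulrDr -!scalerAr mulr1 scaleNr mulrA Wf_sqr // mul1r.
Qed.

Lemma conjm_givens_r t : conjm (givens t) (Wf b) = (cos t)%:C *: Wf b + (sin t)%:C *: Wf a.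
Proof.
rewrite (conjm_rotor_anticomm Wf_mul_sqr Wf_mul_skew) ?rotor_double; last first.
  rewrite -mulrA Wf_sqr // mulr1 mulrA Wf_anticomm 1?eq_sym //.
  by rewrite mulNr opprK -mulrA Wf_sqr // mulr1.
rewrite /rotor cosN sinN rmorphN mulrDr -!scalerAr mulr1 scaleNr mulrA.
by rewrite Wf_anticomm 1?eq_sym // mulNr -mulrA Wf_sqr // mulr1 scalerN opprK.
Qed.

Lemma conjm_givens_other t j : (0 < j <= n)%N -> a != j -> b != j ->
  conjm (givens t) (Wf j) = Wf j.
Proof.
move=> j_range neq_aj neq_bj; apply: (conjm_rotor_comm Wf_mul_sqr Wf_mul_skew).
rewrite -mulrA (Wf_anticomm b_range j_range) // mulrN [in LHS]mulrA.
by rewrite (Wf_anticomm a_range j_range) // mulNr opprK -mulrA.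
Qed.

Lemma conjm_givens v t :
  conjm (givens t) (lincomb v) =
  lincomb (fun j => if j == a then cos t * v a + sin t * v b
                    else if j == b then cos t * v b - sin t * v a else v j).
Proof.
have iota_uniq : uniq (index_iota 1 n.+1) by rewrite /index_iota iota_uniq.
have a_iota : a \in index_iota 1 n.+1 by rewrite mem_index_iota ltnS.
have b_iota : b \in index_iota 1 n.+1 by rewrite mem_index_iota ltnS.
rewrite conjm_lincomb /lincomb (bigD2_seq _ iota_uniq a_iota b_iota neq_ab).
rewrite [RHS](bigD2_seq _ iota_uniq a_iota b_iota neq_ab) eqxx eq_sym (negbTE neq_ab) eqxx.
rewrite conjm_givens_l conjm_givens_r addrA [RHS]addrA; congr (_ + _).
  by apply/matrixP => i j; rewrite !mxE !(rmorphD, rmorphB, rmorphM); ring.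
rewrite big_seq_cond [RHS]big_seq_cond; apply: eq_bigr => j /andP[j_iota /andP[neq_ja neq_jb]].
rewrite mem_index_iota ltnS in j_iota.
by rewrite (negbTE neq_ja) (negbTE neq_jb) conjm_givens_other 1?eq_sym.
Qed.

Lemma conjm_givens_atan v w : 0 < v a -> 0 <= w -> w ^+ 2 = v a ^+ 2 + v b ^+ 2 ->
  conjm (givens (atan (v b / v a))) (lincomb v) =
  lincomb (fun j => if j == a then w else if j == b then 0 else v j).
Proof.
move=> va_gt0 w_ge0 w_sqr; rewrite conjm_givens.
apply: eq_lincomb => j _; case: eqP => _; first exact: rot_atan_norm.
by case: eqP => // _; rewrite rot_atan_zero.
Qed.

End Givens.

Definition swept_left (v : nat -> R) m j : R :=
  if (j <= m)%N then 0 else if j == m.+1 then Num.sqrt (sqsum v 1 m.+2) else v j.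

Lemma conjm_sweep_left (v th : nat -> R) m : (m < n)%N -> 0 <= v 1 ->
  (forall i, (0 < i <= m)%N -> 0 < v i.+1) ->
  (forall i, (0 < i <= m)%N -> th i = atan (Num.sqrt (sqsum v 1 i.+1) / v i.+1)) ->
  conjm (\prod_(i < m) givens (m - i).+1 (m - i) (th (m - i)%N)) (lincomb v) =
  lincomb (swept_left v m).
Proof.
elim: m => [|m IH] m_lt v1_ge0 v_gt0 th_eq.
  rewrite big_ord0 conjm1; apply: eq_lincomb => j /andP[j_gt0 _].
  by rewrite /swept_left leqNgt j_gt0 /=; case: eqP => [->|] //; rewrite sqrt_sqsum1.
rewrite big_ord_recl subn0 conjmM.
under eq_bigr do rewrite lift0 subSS.
rewrite IH //; last first.
- by move=> i i_range; apply: th_eq; lia.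
- by move=> i i_range; apply: v_gt0; lia.
- by lia.
set w := Num.sqrt (sqsum v 1 m.+3).
have va : swept_left v m m.+2 = v m.+2 by rewrite /swept_left; nat_cases.
have vb : swept_left v m m.+1 = Num.sqrt (sqsum v 1 m.+2) by rewrite /swept_left; nat_cases.
have w_sqr : w ^+ 2 = swept_left v m m.+2 ^+ 2 + swept_left v m m.+1 ^+ 2.
  by rewrite va vb !sqr_sqrtr ?sqsum_ge0 // sqsum_recr // addrC.
rewrite (th_eq m.+1) ?ltnSn // -[v m.+2]va -[Num.sqrt _]vb.
rewrite (conjm_givens_atan _ _ _ _ _ w_sqr) ?va ?v_gt0 ?sqrtr_ge0 //; try lia.
by apply: eq_lincomb => j _; rewrite /swept_left; nat_cases.
Qed.

Definition swept_right (v : nat -> R) m j : R :=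
  if (j < m)%N then v j else if j == m then Num.sqrt (sqsum v m n.+1) else 0.

Lemma conjm_sweep_right (v th : nat -> R) m : (0 < m <= n)%N -> 0 <= v n ->
  (forall i, (m <= i < n)%N -> 0 < v i) ->
  (forall i, (m <= i < n)%N -> th i = atan (Num.sqrt (sqsum v i.+1 n.+1) / v i)) ->
  conjm (\prod_(m <= i < n) givens i i.+1 (th i)) (lincomb v) = lincomb (swept_right v m).
Proof.
move=> /andP[+ m_le_n] vn_ge0; rewrite -(subKn m_le_n).
move: (n - m)%N => d; clear m m_le_n.
elim: d => [|d IH] m_gt0 v_gt0 th_eq.
  rewrite subn0 big_geq // conjm1; apply: eq_lincomb => j /andP[_ j_le_n].
  rewrite /swept_right; case: ltnP => // j_ge_n; have -> : j = n by lia.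
  by rewrite eqxx sqrt_sqsum1.
have d_lt_n : (d < n)%N by lia.
rewrite -(subnSK d_lt_n) in IH; set m := (n - d.+1)%N in m_gt0 v_gt0 th_eq IH *.
rewrite big_ltn; last by lia.
rewrite conjmM IH; last first.
- by move=> i i_range; apply: th_eq; lia.
- by move=> i i_range; apply: v_gt0; lia.
- by [].
set w := Num.sqrt (sqsum v m n.+1).
have va : swept_right v m.+1 m = v m by rewrite /swept_right ltnSn.
have vb : swept_right v m.+1 m.+1 = Num.sqrt (sqsum v m.+1 n.+1).
  by rewrite /swept_right ltnn eqxx.
have w_sqr : w ^+ 2 = swept_right v m.+1 m ^+ 2 + swept_right v m.+1 m.+1 ^+ 2.
  by rewrite va vb !sqr_sqrtr ?sqsum_ge0 // (@sqsum_recl _ _ m) //; lia.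
rewrite (th_eq m); last by lia.
rewrite -[v m]va -[Num.sqrt _]vb.
rewrite (conjm_givens_atan _ _ _ _ _ w_sqr) ?va ?v_gt0 ?sqrtr_ge0 //; try lia.
by apply: eq_lincomb => j _; rewrite /swept_right; nat_cases.
Qed.

End AnticommutingFamily.

Section Theorem1.
Variables (R : realType) (n k : nat).
Hypothesis n_ge2 : (2 <= n)%N.
Hypothesis k_range : (0 < k <= n)%N.
Local Notation eps := (eps R n).
Local Notation c := (c R n k).
Local Notation W := (W R n k).
Local Notation theta := (theta R n k).
Local Notation lincomb := (lincomb n W).
Local Notation givens := (givens W).

Let n_gt0 : (0 : R) < n%:R.
Proof. by rewrite ltr0n; lia. Qed.
Let n_pred_gt0 : (0 : R) < n%:R - 1.
Proof. by rewrite subr_gt0 ltr1n; lia. Qed.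

Lemma eps_gt0 : 0 < eps.
Proof. by rewrite invr_gt0 sqrtr_gt0 mulr_gt0. Qed.

Lemma c_neq j : j != k -> c j = eps.
Proof. by rewrite /c => /negbTE ->. Qed.

Lemma c_gt0 j : 0 < c j.
Proof.
rewrite /c; case: eqP => _; last exact: eps_gt0.
by rewrite sqrtr_gt0 divr_gt0.
Qed.

Lemma sqsum_c_lt i : (i < k)%N -> sqsum c 1 i.+1 = i%:R * eps ^+ 2.
Proof.
move=> i_lt_k; rewrite (@sqsum_const _ _ _ _ eps) ?subn1 //.
by move=> j j_range; rewrite c_neq //; apply/eqP; lia.
Qed.

Lemma sqsum_c_gt i : (k <= i)%N -> sqsum c i.+1 n.+1 = (n - i)%:R * eps ^+ 2.
Proof.
move=> k_le_i; rewrite (@sqsum_const _ _ _ _ eps) ?subSS //.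
by move=> j j_range; rewrite c_neq //; apply/eqP; lia.
Qed.

Lemma sqsum_c_le_k : sqsum c 1 k.+1 = (k.-1)%:R * eps ^+ 2 + c k ^+ 2.
Proof.
case/andP: k_range => k_gt0 _.
rewrite sqsum_recr //; have -> : sqsum c 1 k = sqsum c 1 k.-1.+1 by rewrite prednK.
by rewrite sqsum_c_lt // ltn_predL.
Qed.

Lemma sqsum_c : sqsum c 1 n.+1 = 1.
Proof.
rewrite (@sqsum_cat _ _ _ k.+1); last by lia.
rewrite sqsum_c_le_k sqsum_c_gt // /c eqxx sqr_sqrtr ?divr_ge0 ?ltW //.
rewrite exprVn sqr_sqrtr ?mulr_ge0 ?ltW // addrAC -mulrDl -natrD.
have -> : (k.-1 + (n - k))%N = n.-1 by lia.
rewrite -subn1 natrB; last by lia.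
by field; rewrite !lt0r_neq0.
Qed.

Local Notation c_left := (swept_left c k.-1).

Lemma c_left_lt j : (j < k)%N -> c_left j = 0.
Proof. by move=> j_lt_k; rewrite /swept_left; nat_cases. Qed.

Lemma c_left_k : c_left k = Num.sqrt (sqsum c 1 k.+1).
Proof.
case/andP: k_range => k_gt0 _.
by rewrite /swept_left prednK // leqNgt ltn_predL k_gt0 eqxx.
Qed.

Lemma c_left_gt j : (k < j)%N -> c_left j = c j.
Proof. by move=> k_lt_j; rewrite /swept_left; nat_cases. Qed.

Lemma c_left_gt0 i : (k <= i <= n)%N -> 0 < c_left i.
Proof.
case/andP=> k_le_i _; case: (ltngtP k i) => [k_lt_i|i_lt_k|<-]; [by rewrite c_left_gt ?c_gt0|lia|].
rewrite c_left_k sqrtr_gt0 sqsum_c_le_k.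
by apply: ltr_wpDl; rewrite ?exprn_gt0 ?c_gt0 // mulr_ge0 ?sqr_ge0.
Qed.

Lemma theta_left i : (0 < i < k)%N -> theta i = atan (Num.sqrt (sqsum c 1 i.+1) / c i.+1).
Proof.
case/andP=> i_gt0 i_lt_k; rewrite /theta i_lt_k sqsum_c_lt // sqrtrM ?ler0n //.
rewrite sqrtr_sqr ger0_norm ?(ltW eps_gt0) //; case: ltnP => [i_lt|i_ge].
  by rewrite c_neq ?mulfK ?lt0r_neq0 ?eps_gt0 //; apply/eqP; lia.
have -> : i = k.-1 by lia.
by rewrite prednK //; case/andP: k_range.
Qed.

Lemma theta_right i : (k <= i < n)%N ->
  theta i = atan (Num.sqrt (sqsum c_left i.+1 n.+1) / c_left i).
Proof.
case/andP=> k_le_i i_lt_n.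
rewrite (@eq_sqsum _ _ c) => [|j j_range]; last by rewrite c_left_gt //; lia.
rewrite /theta ltnNge k_le_i /= sqsum_c_gt // sqrtrM ?ler0n //.
rewrite sqrtr_sqr ger0_norm ?(ltW eps_gt0) //; case: ltnP => [k_lt_i|i_le_k].
  by rewrite c_left_gt // c_neq ?mulfK ?lt0r_neq0 ?eps_gt0 ?gtn_eqF.
have <- : k = i by lia.
by rewrite c_left_k sqsum_c_le_k.
Qed.

Lemma Rot_givens m : (0 < m < n)%N ->
  Rot R n k m = if (m < k)%N then givens m.+1 m (theta m) else givens m m.+1 (theta m).
Proof.
case/andP=> m_gt0 m_lt_n.
have scale_i_cancel (K : 'M[R[i]]_(qdim n.-1)) :
    (- 'i * (theta m / 2)%:C) *: ('i *: K) = (theta m / 2)%:C *: K.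
  by rewrite scalerA mulrAC mulNr -expr2 sqr_i opprK mul1r.
rewrite /Rot /G /givens; case: ltnP => m_k; rewrite scale_i_cancel expm_rotor //.
all: by apply: (Wf_mul_sqr (W_sqr R n_ge2 k_range) (W_anticomm R n_ge2 k_range)); lia.
Qed.

Lemma sqsum_c_left : sqsum c_left k n.+1 = 1.
Proof.
have k_le_n : (k <= n)%N by case/andP: k_range.
rewrite sqsum_recl // c_left_k sqr_sqrtr ?sqsum_ge0 // -sqsum_c.
rewrite [RHS](@sqsum_cat _ _ _ k.+1); last by lia.
congr (_ + _).
by apply: eq_sqsum => j j_range; apply: c_left_gt; lia.
Qed.

Lemma conjm_U_L : conjm (U_L R n k) (O_k R n k) = lincomb c_left.
Proof.
have -> : U_L R n k = \prod_(i < k.-1) givens (k.-1 - i).+1 (k.-1 - i) (theta (k.-1 - i)%N).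
  apply: eq_bigr => i _; have := ltn_ord i => i_lt.
  by rewrite Rot_givens ?ifT //; lia.
apply: (conjm_sweep_left (W_sqr R n_ge2 k_range) (W_adj R n_ge2 k_range)
  (W_anticomm R n_ge2 k_range)).
- by lia.
- exact: ltW (c_gt0 1).
- by move=> i _; exact: c_gt0.
- by move=> i i_range; apply: theta_left; lia.
Qed.

Lemma conjm_U_R : conjm (U_R R n k) (lincomb c_left) = W k.
Proof.
have -> : U_R R n k = \prod_(k <= m < n) givens m m.+1 (theta m).
  apply: eq_big_nat => m m_range.
  by rewrite Rot_givens ?ifF //; lia.
have c_left_n : 0 <= c_left n by apply/ltW/c_left_gt0; lia.
have c_left_pos i : (k <= i < n)%N -> 0 < c_left i by move=> i_range; apply: c_left_gt0; lia.
rewrite (conjm_sweep_right (W_sqr R n_ge2 k_range) (W_adj R n_ge2 k_range)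
  (W_anticomm R n_ge2 k_range) k_range c_left_n c_left_pos theta_right).
rewrite -(lincomb_delta W k_range); apply: eq_lincomb => j _.
rewrite /swept_right; case: ltngtP => [j_lt_k|//|_]; first by rewrite c_left_lt.
by rewrite sqsum_c_left sqrtr1.
Qed.

End Theorem1.

Theorem theorem1 (R : realType) (n k : nat) :
  (2 <= n)%N -> (1 <= k <= n)%N ->
  U R n k * O_k R n k * adj (U R n k) = E_k R n k.
Proof.
move=> n_ge2 k_range.
by rewrite -/(conjm (U R n k) (O_k R n k)) /U conjmM conjm_U_L // conjm_U_R.
Qed.
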